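(* Let $r\ge1$, $\mathbf{m}=(m_1,\ldots,m_r)\in\mathbb{N}^r$, $m=m_1+\cdots+m_r$, $\mathbf{f}\in\mathbb{C}^r$ with $(\mathbf{f})_{\mathbf{m}}\neq0$ and no $f_i$ a non-positive integer, and $a,b,c\in\mathbb{C}$ with $c\notin\{0,-1,-2,\ldots\}$. Then for $|x|<1$ $$ {}_{r+2}F_{r+1}\!\left(\begin{matrix}a,b,\mathbf{f}+\mathbf{m}\\ c,\mathbf{f}\end{matrix}\,\middle|\, x\right) =\frac{1}{(\mathbf{f})_{\mathbf{m}}}\sum_{k=0}^m(-1)^kD_k\,(b)_k\,{}_{2}F_{1}\!\left(\begin{matrix}a,b+k\\ c\end{matrix}\,\middle|\, x\right), $$ where $D_k=\sum_{j=k}^m\alpha_j\mathbf{S}_j^{(k)}=\frac{(-1)^k(\mathbf{f}-b)_{\mathbf{m}}}{k!}{}_{r+1}F_{r}\!\left(\begin{matrix}-k,1-\mathbf{f}+b\\1-\mathbf{f}+b-\mathbf{m}\end{matrix}\right)$ and $(\mathbf{f}-b-t)_{\mathbf{m}}=\sum_{j=0}^m\alpha_jt^j$.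
   Context: $(a)_k=\Gamma(a+k)/\Gamma(a)$. For vectors: $(\mathbf{f})_{\mathbf{m}}=\prod_i(f_i)_{m_i}$, $\mathbf{f}+\alpha$ and $\mathbf{f}+\mathbf{m}$ componentwise; a vector among hypergeometric parameters means its components are listed. ${}_pF_q(\mathbf{a};\mathbf{b};x)=\sum_{n\ge0}\frac{(a_1)_n\cdots(a_p)_n}{(b_1)_n\cdots(b_q)_n}\frac{x^n}{n!}$, and ${}_pF_q(\mathbf{a};\mathbf{b})$ means the value at $x=1$. $\mathbf{S}_j^{(k)}$ are Stirling numbers of the second kind. *)

From Stdlib Require Import Arith Factorial Reals List ClassicalEpsilon.
From Coquelicot Require Import Coquelicot.
Open Scope C_scope.

Fixpoint csum (g : nat -> C) (n : nat) : C :=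
  match n with O => RtoC 0 | S n' => csum g n' + g n' end.

Fixpoint cprod (g : nat -> C) (n : nat) : C :=
  match n with O => RtoC 1 | S n' => cprod g n' * g n' end.

Definition cpow (z : C) (n : nat) : C := cprod (fun _ => z) n.

Definition poch (a : C) (k : nat) : C := cprod (fun l => a + RtoC (INR l)) k.

Definition poch_vec (f : list C) (m : list nat) : C :=
  fold_right (fun p acc => poch (fst p) (snd p) * acc) (RtoC 1) (combine f m).

Definition vadd (f : list C) (m : list nat) : list C :=
  map (fun p => fst p + RtoC (INR (snd p))) (combine f m).

Definition hyp_term (as_ bs : list C) (x : C) (n : nat) : C :=
  fold_right (fun a acc => poch a n * acc) (RtoC 1) as_
  / fold_right (fun b acc => poch b n * acc) (RtoC 1) bs
  * cpow x n / RtoC (INR (fact n)).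

(* value of pFq(as; bs | x): the sum of the series (chosen by epsilon; it is
   meaningful whenever the series converges) *)
Definition hypF (as_ bs : list C) (x : C) : C :=
  epsilon (inhabits (RtoC 0))
    (fun l => is_series (V := C_NormedModule) (hyp_term as_ bs x) l).

Fixpoint stirling2 (j k : nat) : nat :=
  match j, k with
  | O, O => 1
  | O, S _ => 0
  | S _, O => 0
  | S j', S k' => stirling2 j' k' + S k' * stirling2 j' (S k')
  end.

Fixpoint sumn (m : list nat) : nat :=
  match m with nil => O | cons a t => (a + sumn t)%nat end.

(* The quotient (f+m)_n / (f)_n equals (f+n)_m / (f)_m, and (f+n)_m = P(-(b+n)) for
   the polynomial P(t) = (f-b-t)_m = sum_j alpha_j t^j.  Expanding each power
   (-z)^j in falling factorials through Stirling numbers gives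
   P(-z) = sum_k (-1)^k D_k (z)_k, and (b)_n (b+n)_k = (b)_k (b+k)_n turns the n-th
   term of the left-hand series into the corresponding combination of n-th terms of
   the 2F1 series, which converge for |x| < 1 by the ratio test.
   For the closed form of D_k, Stirling inversion
   k! S(j,k) = (-1)^k sum_n (-1)^n C(k,n) n^j gives D_k = (-1)^k / k! sum_n (-k)_n/n! P(n),
   and the reflection (g)_m (1-g)_n = (1-g-m)_n (g-n)_m rewrites P(n) = (f-b-n)_m
   as (f-b)_m times the n-th term of the terminating r+1Fr at 1. *)

From Stdlib Require Import Arith Factorial Reals List Lia Lra Psatz ClassicalEpsilon.
From Coquelicot Require Import Coquelicot.
Open Scope C_scope.

Lemma RtoC_INR_S n : RtoC (INR (S n)) = RtoC (INR n) + 1.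
Proof. rewrite S_INR, RtoC_plus. reflexivity. Qed.

Lemma RtoC_INR_add n k : RtoC (INR (n + k)) = RtoC (INR n) + RtoC (INR k).
Proof. rewrite plus_INR, RtoC_plus. reflexivity. Qed.

Lemma RtoC_INR_S_neq0 n : RtoC (INR n) + 1 <> 0.
Proof.
  rewrite <- RtoC_INR_S. intro E. apply (f_equal fst) in E.
  exact (not_0_INR (S n) (Nat.neq_succ_0 n) E).
Qed.

Lemma RtoC_INR_fact_neq0 n : RtoC (INR (fact n)) <> 0.
Proof. intro E. apply (f_equal fst) in E. exact (INR_fact_neq_0 n E). Qed.

Lemma RtoC_INR_fact_S n :
  RtoC (INR (fact (S n))) = (RtoC (INR n) + 1) * RtoC (INR (fact n)).
Proof. rewrite fact_simpl, mult_INR, RtoC_mult, RtoC_INR_S. reflexivity. Qed.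

Lemma csum_ext (g h : nat -> C) n :
  (forall k, (k < n)%nat -> g k = h k) -> csum g n = csum h n.
Proof. induction n; intros H; simpl; auto. rewrite IHn, H; auto. Qed.

Lemma csum_add (g h : nat -> C) n : csum (fun k => g k + h k) n = csum g n + csum h n.
Proof. induction n; simpl; [ring | rewrite IHn; ring]. Qed.

Lemma csum_mult_l (c : C) (g : nat -> C) n : csum (fun k => c * g k) n = c * csum g n.
Proof. induction n; simpl; [ring | rewrite IHn; ring]. Qed.

Lemma csum_zero n : csum (fun _ => 0) n = 0.
Proof. induction n; simpl; [reflexivity | rewrite IHn; ring]. Qed.

Lemma csum_S_l (g : nat -> C) n : csum g (S n) = g O + csum (fun k => g (S k)) n.
Proof. induction n; simpl in *; [ring | rewrite IHn; ring]. Qed.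

Lemma csum_swap (g : nat -> nat -> C) n p :
  csum (fun k => csum (fun j => g j k) p) n = csum (fun j => csum (fun k => g j k) n) p.
Proof.
  induction n; simpl.
  - rewrite csum_zero. reflexivity.
  - rewrite IHn, <- csum_add. reflexivity.
Qed.

Lemma csum_tail_zero (g : nat -> C) n p :
  (forall k, (n <= k)%nat -> g k = 0) -> (n <= p)%nat -> csum g p = csum g n.
Proof. intros H Hp. induction Hp; simpl; [reflexivity | rewrite IHHp, H by lia; ring]. Qed.

Lemma sum_n_csum (g : nat -> C) n : @sum_n C_NormedModule g n = csum g (S n).
Proof.
  induction n.
  - rewrite sum_O. simpl. ring.
  - rewrite sum_Sn, IHn. reflexivity.
Qed.

Lemma cpow_S z n : cpow z (S n) = cpow z n * z.
Proof. reflexivity. Qed.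

Lemma cpow_one n : cpow 1 n = 1.
Proof. induction n; [reflexivity | rewrite cpow_S, IHn; ring]. Qed.

Lemma cpow_m1_sqr n : cpow (- RtoC 1) n * cpow (- RtoC 1) n = 1.
Proof.
  induction n.
  - change (cpow (- RtoC 1) 0) with (RtoC 1). ring.
  - rewrite cpow_S.
    transitivity (cpow (- RtoC 1) n * cpow (- RtoC 1) n); [ring | exact IHn].
Qed.

Lemma poch_0 a : poch a 0 = 1.
Proof. reflexivity. Qed.

Lemma poch_S a n : poch a (S n) = poch a n * (a + RtoC (INR n)).
Proof. reflexivity. Qed.

Lemma poch_add a n k : poch a (n + k) = poch a n * poch (a + RtoC (INR n)) k.
Proof.
  induction k.
  - rewrite Nat.add_0_r, poch_0. ring.
  - rewrite Nat.add_succ_r, !poch_S, IHk, RtoC_INR_add. ring.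
Qed.

Lemma poch_S_l a n : poch a (S n) = a * poch (a + 1) n.
Proof.
  change (S n) with (1 + n)%nat. rewrite poch_add.
  replace (poch a 1) with a by (unfold poch; simpl; ring).
  simpl INR. reflexivity.
Qed.

Lemma poch_neg_nat k n : (k < n)%nat -> poch (- RtoC (INR k)) n = 0.
Proof.
  intros H. replace n with (S k + (n - S k))%nat by lia.
  rewrite poch_add, poch_S. ring.
Qed.

Lemma poch_neq0 a n : (forall l, a <> - RtoC (INR l)) -> poch a n <> 0.
Proof.
  intros H. induction n.
  - intro E. injection E. lra.
  - rewrite poch_S. apply Cmult_neq_0; auto.
    intro E. apply (H n).
    replace a with (a + RtoC (INR n) - RtoC (INR n)) by ring. rewrite E. ring.
Qed.

Lemma poch_add_comm x k n :
  poch (x + RtoC (INR k)) n * poch x k = poch x n * poch (x + RtoC (INR n)) k.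
Proof. rewrite <- poch_add, Cmult_comm, <- poch_add, Nat.add_comm. reflexivity. Qed.

Lemma poch_reflect w n : poch w n = cpow (- RtoC 1) n * poch (1 - w - RtoC (INR n)) n.
Proof.
  revert w. induction n; intros w.
  - rewrite !poch_0. change (cpow (- RtoC 1) 0) with (RtoC 1). ring.
  - rewrite poch_S, IHn, poch_S_l, cpow_S, RtoC_INR_S.
    replace (1 - w - (RtoC (INR n) + 1) + 1) with (1 - w - RtoC (INR n)) by ring.
    ring.
Qed.

Lemma poch_reflect_shift (g : C) (k n : nat) :
  poch g k * poch (1 - g) n = poch (1 - g - RtoC (INR k)) n * poch (g - RtoC (INR n)) k.
Proof.
  rewrite (poch_reflect (1 - g)), (poch_reflect (1 - g - RtoC (INR k))).
  replace (1 - (1 - g) - RtoC (INR n)) with (g - RtoC (INR n)) by ring.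
  replace (1 - (1 - g - RtoC (INR k)) - RtoC (INR n))
    with (g - RtoC (INR n) + RtoC (INR k)) by ring.
  assert (E := poch_add_comm (g - RtoC (INR n)) k n).
  replace (g - RtoC (INR n) + RtoC (INR n)) with g in E by ring.
  transitivity (cpow (- RtoC 1) n * (poch (g - RtoC (INR n)) n * poch g k)); [ring |].
  rewrite <- E. ring.
Qed.

Definition falling (t : C) (k : nat) : C := cprod (fun l => t - RtoC (INR l)) k.

Lemma falling_S t k : falling t (S k) = falling t k * (t - RtoC (INR k)).
Proof. reflexivity. Qed.

Lemma falling_poch t k : cpow (- RtoC 1) k * poch (- t) k = falling t k.
Proof.
  induction k.
  - rewrite poch_0. change (cpow (- RtoC 1) 0) with (RtoC 1). unfold falling, cprod. ring.
  - rewrite cpow_S, poch_S, falling_S, <- IHk. ring.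
Qed.

Lemma stirling2_gt j k : (j < k)%nat -> stirling2 j k = 0%nat.
Proof.
  revert k. induction j; intros k H; destruct k; try lia; [reflexivity |].
  simpl. rewrite !IHj by lia. lia.
Qed.

Lemma stirling2_S_S j k :
  RtoC (INR (stirling2 (S j) (S k)))
  = RtoC (INR (stirling2 j k)) + (RtoC (INR k) + 1) * RtoC (INR (stirling2 j (S k))).
Proof.
  change (stirling2 (S j) (S k)) with (stirling2 j k + S k * stirling2 j (S k))%nat.
  rewrite plus_INR, mult_INR, RtoC_plus, RtoC_mult, RtoC_INR_S. reflexivity.
Qed.

(* Since t * (t)^(k) = (t)^(k+1) + k (t)^(k), multiplying by t is the Stirling recurrence. *)
Lemma cpow_stirling2 t j N : (j <= N)%nat ->
  cpow t j = csum (fun k => RtoC (INR (stirling2 j k)) * falling t k) (S N).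
Proof.
  induction j; intros HjN.
  - rewrite csum_S_l, (csum_ext _ (fun _ => 0)), csum_zero.
    + change (cpow t 0) with (RtoC 1). change (falling t 0) with (RtoC 1).
      change (INR (stirling2 0 0)) with 1%R. ring.
    + intros k _. simpl stirling2. simpl INR. ring.
  - rewrite cpow_S, IHj by lia.
    set (s := fun k => RtoC (INR (stirling2 j k))).
    rewrite Cmult_comm, <- csum_mult_l.
    rewrite (csum_ext _ (fun k => s k * falling t (S k) + RtoC (INR k) * s k * falling t k))
      by (intros k _; rewrite falling_S; unfold s; ring).
    rewrite csum_add, (csum_S_l (fun k => RtoC (INR k) * s k * falling t k)).
    simpl csum at 1.
    replace (s N) with (RtoC 0) by (unfold s; rewrite stirling2_gt by lia; reflexivity).
    rewrite csum_S_l.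
    change (stirling2 (S j) 0) with 0%nat.
    rewrite (csum_ext (fun k => RtoC (INR (stirling2 (S j) (S k))) * falling t (S k))
               (fun k => s k * falling t (S k) + RtoC (INR (S k)) * s (S k) * falling t (S k)))
      by (intros k _; rewrite stirling2_S_S, RtoC_INR_S; unfold s; ring).
    rewrite csum_add. simpl INR. ring.
Qed.

Lemma poch_neg_S k n :
  poch (- RtoC (INR (S k))) (S n) = - RtoC (INR (S k)) * poch (- RtoC (INR k)) n.
Proof. rewrite poch_S_l, RtoC_INR_S. do 2 f_equal. ring. Qed.

(* [sbinom k n = (-1)^n C(k, n)]. *)
Definition sbinom (k n : nat) : C := poch (- RtoC (INR k)) n / RtoC (INR (fact n)).

Lemma sbinom_0_r k : sbinom k 0 = 1.
Proof. unfold sbinom. rewrite poch_0. simpl INR. field. Qed.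

Lemma sbinom_gt k n : (k < n)%nat -> sbinom k n = 0.
Proof. intros H. unfold sbinom. rewrite poch_neg_nat by exact H. unfold Cdiv. ring. Qed.

Lemma sbinom_S_S k n : sbinom (S k) (S n) = sbinom k (S n) - sbinom k n.
Proof.
  unfold sbinom. rewrite poch_neg_S, RtoC_INR_fact_S, poch_S, RtoC_INR_S.
  field. split; [apply RtoC_INR_fact_neq0 | apply RtoC_INR_S_neq0].
Qed.

Lemma mul_sbinom_S k n :
  RtoC (INR n) * sbinom (S k) n = RtoC (INR (S k)) * (sbinom (S k) n - sbinom k n).
Proof.
  unfold sbinom. assert (H := poch_neg_S k n). rewrite poch_S in H.
  assert (Hn : RtoC (INR n) * poch (- RtoC (INR (S k))) n
               = RtoC (INR (S k)) * (poch (- RtoC (INR (S k))) n - poch (- RtoC (INR k)) n)).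
  { transitivity (poch (- RtoC (INR (S k))) n * (- RtoC (INR (S k)) + RtoC (INR n))
                  + RtoC (INR (S k)) * poch (- RtoC (INR (S k))) n); [ring |].
    rewrite H. ring. }
  transitivity (RtoC (INR n) * poch (- RtoC (INR (S k))) n / RtoC (INR (fact n)));
    [| rewrite Hn]; field; apply RtoC_INR_fact_neq0.
Qed.

Lemma csum_sbinom_S k n : csum (sbinom (S k)) (S n) = sbinom k n.
Proof.
  induction n.
  - simpl. rewrite !sbinom_0_r. ring.
  - change (csum (sbinom (S k)) (S (S n))) with (csum (sbinom (S k)) (S n) + sbinom (S k) (S n)).
    rewrite IHn, sbinom_S_S. ring.
Qed.

Lemma csum_sbinom k N : (k < N)%nat -> csum (sbinom k) N = if (k =? 0)%nat then 1 else 0.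
Proof.
  intros H. destruct N as [|N]; [lia |]. destruct k as [|k].
  - rewrite csum_S_l, sbinom_0_r, (csum_ext _ (fun _ => 0)), csum_zero
      by (intros; apply sbinom_gt; lia).
    simpl. ring.
  - rewrite csum_sbinom_S, sbinom_gt by lia. reflexivity.
Qed.

Lemma csum_sbinom_pow N j k : (k < N)%nat ->
  csum (fun n => sbinom k n * cpow (RtoC (INR n)) j) N
  = cpow (- RtoC 1) k * RtoC (INR (fact k)) * RtoC (INR (stirling2 j k)).
Proof.
  revert k. induction j; intros k Hk.
  - rewrite (csum_ext _ (sbinom k)) by (intros; unfold cpow, cprod; ring).
    rewrite csum_sbinom by exact Hk.
    destruct k; simpl; [unfold cpow, cprod |]; ring.
  - destruct k as [|k].
    + rewrite (csum_ext _ (fun _ => 0)), csum_zero; [simpl; ring |].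
      intros n _. rewrite cpow_S.
      destruct n; [simpl; ring | rewrite sbinom_gt by lia; ring].
    + rewrite (csum_ext _ (fun n => RtoC (INR (S k)) * (sbinom (S k) n * cpow (RtoC (INR n)) j)
                                  + (- RtoC (INR (S k))) * (sbinom k n * cpow (RtoC (INR n)) j))).
      2:{ intros n _. rewrite cpow_S.
          transitivity ((RtoC (INR n) * sbinom (S k) n) * cpow (RtoC (INR n)) j); [ring |].
          rewrite mul_sbinom_S. ring. }
      rewrite csum_add, !csum_mult_l, !IHj by lia.
      rewrite stirling2_S_S, cpow_S, RtoC_INR_fact_S, RtoC_INR_S. ring.
Qed.

Definition stirling_coef (alpha : nat -> C) (M k : nat) : C :=
  csum (fun j => if (k <=? j)%nat then alpha j * RtoC (INR (stirling2 j k)) else RtoC 0) (S M).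

Lemma stirling_coef_csum alpha M k :
  stirling_coef alpha M k = csum (fun j => alpha j * RtoC (INR (stirling2 j k))) (S M).
Proof.
  apply csum_ext. intros j _. destruct (Nat.leb_spec k j); [reflexivity |].
  rewrite stirling2_gt by exact H. simpl INR. ring.
Qed.

Lemma csum_stirling_coef_poch alpha M z :
  csum (fun k => cpow (- RtoC 1) k * stirling_coef alpha M k * poch z k) (S M)
  = csum (fun j => alpha j * cpow (- z) j) (S M).
Proof.
  rewrite (csum_ext _ (fun k => csum (fun j => alpha j * RtoC (INR (stirling2 j k))
                                            * falling (- z) k) (S M))).
  2:{ intros k _. rewrite stirling_coef_csum, <- falling_poch.
      replace (- - z) with z by ring.
      transitivity (cpow (- RtoC 1) k * poch z k
                    * csum (fun j => alpha j * RtoC (INR (stirling2 j k))) (S M)); [ring |].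
      rewrite <- csum_mult_l. apply csum_ext. intros j _. ring. }
  rewrite csum_swap. apply csum_ext. intros j Hj.
  rewrite (cpow_stirling2 (- z) j M) by lia. rewrite <- csum_mult_l.
  apply csum_ext. intros k _. ring.
Qed.

Lemma stirling_coef_sbinom alpha M k : (k <= M)%nat ->
  stirling_coef alpha M k
  = cpow (- RtoC 1) k / RtoC (INR (fact k))
    * csum (fun n => sbinom k n * csum (fun j => alpha j * cpow (RtoC (INR n)) j) (S M)) (S k).
Proof.
  intros Hk.
  rewrite (csum_ext _ (fun n => csum (fun j => alpha j * (sbinom k n * cpow (RtoC (INR n)) j))
                                     (S M)))
    by (intros n _; rewrite <- csum_mult_l; apply csum_ext; intros; ring).
  rewrite <- csum_swap.
  rewrite (csum_ext _ (fun j => cpow (- RtoC 1) k * RtoC (INR (fact k))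
                                * (alpha j * RtoC (INR (stirling2 j k)))))
    by (intros j _; rewrite csum_mult_l, csum_sbinom_pow by lia; ring).
  rewrite csum_mult_l, <- stirling_coef_csum.
  transitivity (cpow (- RtoC 1) k * cpow (- RtoC 1) k * stirling_coef alpha M k);
    [rewrite cpow_m1_sqr; ring |].
  field. apply RtoC_INR_fact_neq0.
Qed.

Definition poch_prod (l : list C) (n : nat) : C :=
  fold_right (fun a acc => poch a n * acc) (RtoC 1) l.

Lemma poch_prod_cons (a : C) (l : list C) (n : nat) :
  poch_prod (a :: l) n = poch a n * poch_prod l n.
Proof. reflexivity. Qed.

Lemma poch_vec_cons (fi : C) (f : list C) (mi : nat) (m : list nat) :
  poch_vec (fi :: f) (mi :: m) = poch fi mi * poch_vec f m.
Proof. reflexivity. Qed.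

Lemma hyp_term_poch_prod (as_ bs : list C) (x : C) (n : nat) :
  hyp_term as_ bs x n = poch_prod as_ n / poch_prod bs n * cpow x n / RtoC (INR (fact n)).
Proof. reflexivity. Qed.

Lemma poch_prod_neq0 (l : list C) (n : nat) :
  (forall i k, (i < length l)%nat -> nth i l 0 <> - RtoC (INR k)) -> poch_prod l n <> 0.
Proof.
  induction l as [|a l IH]; intros H.
  - intro E. injection E. lra.
  - rewrite poch_prod_cons. apply Cmult_neq_0.
    + apply poch_neq0. intros k. apply (H 0%nat k). simpl; lia.
    + apply IH. intros i k Hi. apply (H (S i) k). simpl; lia.
Qed.

Lemma poch_prod_vadd (f : list C) (m : list nat) (n : nat) : length f = length m ->
  poch_prod (vadd f m) n * poch_vec f m
  = poch_prod f n * poch_vec (map (fun fi => fi + RtoC (INR n)) f) m.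
Proof.
  revert m. induction f as [|fi f IH]; intros [|mi m] H; try discriminate.
  - unfold poch_prod, poch_vec. simpl. ring.
  - injection H as H. unfold vadd. simpl map. fold (vadd f m).
    rewrite !poch_prod_cons, !poch_vec_cons.
    transitivity (poch (fi + RtoC (INR mi)) n * poch fi mi
                  * (poch_prod (vadd f m) n * poch_vec f m));
      [ring |].
    rewrite IH, poch_add_comm by exact H. ring.
Qed.

Lemma poch_vec_reflect (b : C) (n : nat) (f : list C) (m : list nat) : length f = length m ->
  poch_vec (map (fun fi => fi - b) f) m * poch_prod (map (fun fi => RtoC 1 - fi + b) f) n
  = poch_prod (map (fun p => RtoC 1 - fst p + b - RtoC (INR (snd p))) (combine f m)) n
    * poch_vec (map (fun fi => fi - b - RtoC (INR n)) f) m.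
Proof.
  revert m. induction f as [|fi f IH]; intros [|mi m] H; try discriminate.
  - unfold poch_prod, poch_vec. simpl. ring.
  - injection H as H. simpl map. simpl combine.
    rewrite !poch_prod_cons, !poch_vec_cons. simpl fst. simpl snd.
    transitivity (poch (fi - b) mi * poch (1 - (fi - b)) n
                  * (poch_vec (map (fun fi => fi - b) f) m
                     * poch_prod (map (fun fi => RtoC 1 - fi + b) f) n));
      [replace (1 - (fi - b)) with (RtoC 1 - fi + b) by ring; ring |].
    rewrite IH, poch_reflect_shift by exact H.
    replace (1 - (fi - b) - RtoC (INR mi)) with (RtoC 1 - fi + b - RtoC (INR mi)) by ring.
    ring.
Qed.

Lemma is_series_C_unique (u : nat -> C) l1 l2 :
  is_series (V := C_NormedModule) u l1 -> is_series (V := C_NormedModule) u l2 -> l1 = l2.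
Proof. exact (filterlim_locally_unique _ _ _). Qed.

Lemma hypF_eq (as_ bs : list C) (x l : C) :
  is_series (V := C_NormedModule) (hyp_term as_ bs x) l -> hypF as_ bs x = l.
Proof.
  intros H. unfold hypF.
  apply (is_series_C_unique (hyp_term as_ bs x)); [| exact H].
  exact (epsilon_spec (inhabits (RtoC 0)) _ (ex_intro _ l H)).
Qed.

Lemma is_series_finite (u : nat -> C) N : (forall n, (N < n)%nat -> u n = 0) ->
  is_series (V := C_NormedModule) u (csum u (S N)).
Proof.
  intros H. unfold is_series.
  apply filterlim_ext_loc with (f := fun _ => csum u (S N)); [| apply filterlim_const].
  exists N. intros n Hn. rewrite sum_n_csum.
  symmetry. apply csum_tail_zero; [intros k Hk; apply H |]; lia.
Qed.

Lemma is_series_csum (u : nat -> nat -> C) (l : nat -> C) N :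
  (forall k, (k < N)%nat -> is_series (V := C_NormedModule) (u k) (l k)) ->
  is_series (V := C_NormedModule) (fun n => csum (fun k => u k n) N) (csum l N).
Proof.
  induction N; intros H; simpl.
  - assert (H0 := is_series_finite (fun _ => RtoC 0) 0 (fun _ _ => eq_refl)).
    replace (csum (fun _ => RtoC 0) 1) with (RtoC 0) in H0 by (simpl; ring).
    exact H0.
  - apply (is_series_plus (V := C_NormedModule)); auto.
Qed.

Lemma eventually_quadratic_nonneg (e b0 c0 : R) : (0 < e)%R ->
  exists N : nat, forall n : nat, (N <= n)%nat ->
    (0 <= e * INR n * INR n + b0 * INR n + c0)%R.
Proof.
  intros He. destruct (INR_unbounded ((Rabs b0 + Rabs c0) / e)) as [N HN].
  exists N. intros n Hn. apply le_INR in Hn.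
  assert (Hlarge : (Rabs b0 + Rabs c0 < e * INR n)%R).
  { replace (Rabs b0 + Rabs c0)%R with (e * ((Rabs b0 + Rabs c0) / e))%R by (field; lra).
    apply Rmult_lt_compat_l; lra. }
  assert (Hb := Rle_abs (- b0)). assert (Hc := Rle_abs (- c0)).
  rewrite Rabs_Ropp in Hb, Hc.
  assert (Ha := Rabs_pos b0). assert (Hc0 := Rabs_pos c0).
  assert (Hn1 : (1 <= INR n)%R).
  { destruct n; [simpl in Hlarge; lra |]. apply (le_INR 1). lia. }
  nra.
Qed.

Lemma ex_series_ratio (u : nat -> C) (q : R) (N : nat) : (0 <= q < 1)%R ->
  (forall n, (N <= n)%nat -> (Cmod (u (S n)) <= Cmod (u n) * q)%R) ->
  ex_series (V := C_NormedModule) u.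
Proof.
  intros Hq Hratio.
  assert (Hgeom : forall p, (Cmod (u (N + p)%nat) <= Cmod (u N) * q ^ p)%R).
  { induction p.
    - rewrite Nat.add_0_r. simpl. lra.
    - rewrite Nat.add_succ_r. eapply Rle_trans; [apply Hratio; lia |].
      simpl. nra. }
  apply (ex_series_incr_n (V := C_NormedModule) u N).
  apply (ex_series_le (V := C_CompleteNormedModule) _ (fun p => Cmod (u N) * q ^ p)%R);
    [exact Hgeom |].
  apply (ex_series_scal_l (V := R_NormedModule)), ex_series_geom.
  rewrite Rabs_pos_eq; lra.
Qed.

Lemma Cmod_add_INR_le (z : C) (n : nat) : (Cmod (z + RtoC (INR n)) <= Cmod z + INR n)%R.
Proof.
  eapply Rle_trans; [apply Cmod_triangle |].
  rewrite Cmod_R, Rabs_pos_eq; [lra | apply pos_INR].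
Qed.

Lemma Cmod_add_INR_ge (z : C) (n : nat) : (INR n - Cmod z <= Cmod (z + RtoC (INR n)))%R.
Proof.
  assert (H := Cmod_triangle (z + RtoC (INR n)) (- z)).
  replace (z + RtoC (INR n) + - z) with (RtoC (INR n)) in H by ring.
  rewrite Cmod_opp, Cmod_R, Rabs_pos_eq in H; [lra | apply pos_INR].
Qed.

Lemma hyp_term_2F1_S (a b c x : C) n : (forall l, c <> - RtoC (INR l)) ->
  hyp_term (a :: b :: nil) (c :: nil) x (S n) =
  hyp_term (a :: b :: nil) (c :: nil) x n *
  ((a + RtoC (INR n)) * (b + RtoC (INR n)) * x / ((c + RtoC (INR n)) * (RtoC (INR n) + 1))).
Proof.
  intros Hc. rewrite !hyp_term_poch_prod, !poch_prod_cons, !poch_S, cpow_S, RtoC_INR_fact_S.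
  unfold poch_prod. simpl fold_right.
  assert (Hcn : c + RtoC (INR n) <> 0).
  { intro E. apply (Hc n). replace c with (c + RtoC (INR n) - RtoC (INR n)) by ring.
    rewrite E. ring. }
  field. repeat split; auto using poch_neq0, RtoC_INR_fact_neq0, RtoC_INR_S_neq0.
Qed.

(* Ratio test with ratio bound [(1 + |x|) / 2]: the quadratic below is
   [q (n - |c|) (n + 1) - |x| (|a| + n) (|b| + n)]. *)
Lemma ex_series_2F1 (a b c x : C) : (forall l, c <> - RtoC (INR l)) -> (Cmod x < 1)%R ->
  ex_series (V := C_NormedModule) (hyp_term (a :: b :: nil) (c :: nil) x).
Proof.
  intros Hc Hx.
  set (y := Cmod x) in *.
  set (q := ((1 + y) / 2)%R).
  assert (Hy : (0 <= y)%R) by apply Cmod_ge_0.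
  assert (Hq : (0 < q - y)%R) by (unfold q; lra).
  destruct (eventually_quadratic_nonneg _ (q - q * Cmod c - y * (Cmod a + Cmod b))
              (- (q * Cmod c + y * Cmod a * Cmod b)) Hq) as [N1 HN1].
  destruct (INR_unbounded (Cmod c)) as [N2 HN2].
  apply (ex_series_ratio _ q (max N1 N2)); [unfold q; lra |].
  intros n Hn.
  assert (Hquad := HN1 n ltac:(lia)).
  assert (Hcn : (Cmod c < INR n)%R) by (apply (Rlt_le_trans _ (INR N2)); [lra | apply le_INR; lia]).
  rewrite hyp_term_2F1_S by exact Hc. rewrite Cmod_mult.
  apply Rmult_le_compat_l; [apply Cmod_ge_0 |].
  assert (Ha := Cmod_add_INR_le a n). assert (Hb := Cmod_add_INR_le b n).
  assert (Hc' := Cmod_add_INR_ge c n).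
  assert (En1 : Cmod (RtoC (INR n) + 1) = (INR n + 1)%R).
  { rewrite <- RtoC_INR_S, Cmod_R, Rabs_pos_eq, S_INR; [reflexivity | apply pos_INR]. }
  assert (Hn0 := pos_INR n).
  rewrite Cmod_div, !Cmod_mult, En1.
  2:{ apply Cmult_neq_0; [| apply RtoC_INR_S_neq0].
      intro E. rewrite E, Cmod_0 in Hc'. lra. }
  apply Rle_div_l; [apply Rmult_lt_0_compat; lra |].
  assert (Hab : (Cmod (a + RtoC (INR n)) * Cmod (b + RtoC (INR n))
                 <= (Cmod a + INR n) * (Cmod b + INR n))%R)
    by (apply Rmult_le_compat; auto using Cmod_ge_0).
  assert (Hden : (q * ((INR n - Cmod c) * (INR n + 1))
                  <= q * (Cmod (c + RtoC (INR n)) * (INR n + 1)))%R)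
    by (apply Rmult_le_compat_l; [unfold q; lra |]; apply Rmult_le_compat_r; lra).
  apply (Rle_trans _ ((Cmod a + INR n) * (Cmod b + INR n) * y)); [apply Rmult_le_compat_r; lra |].
  apply (Rle_trans _ (q * ((INR n - Cmod c) * (INR n + 1)))); [nra | exact Hden].
Qed.

Lemma is_series_hypF_2F1 (a b c x : C) : (forall l, c <> - RtoC (INR l)) -> (Cmod x < 1)%R ->
  is_series (V := C_NormedModule) (hyp_term (a :: b :: nil) (c :: nil) x)
    (hypF (a :: b :: nil) (c :: nil) x).
Proof.
  intros Hc Hx. destruct (ex_series_2F1 a b c x Hc Hx) as [l Hl].
  rewrite (hypF_eq _ _ _ l Hl). exact Hl.
Qed.

Lemma hyp_term_stirling_expansion (f : list C) (m : list nat) (a b c x : C)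
  (alpha : nat -> C) (M n : nat) :
  length f = length m -> poch_vec f m <> 0 ->
  (forall i l, (i < length f)%nat -> nth i f 0 <> - RtoC (INR l)) ->
  (forall l, c <> - RtoC (INR l)) ->
  (forall t, poch_vec (map (fun fi => fi - b - t) f) m
             = csum (fun j => alpha j * cpow t j) (S M)) ->
  hyp_term (a :: b :: vadd f m) (c :: f) x n
  = / poch_vec f m
    * csum (fun k => cpow (- RtoC 1) k * stirling_coef alpha M k * poch b k
                     * hyp_term (a :: b + RtoC (INR k) :: nil) (c :: nil) x n) (S M).
Proof.
  intros Hlen Hfm Hf Hc hP.
  assert (Hcn := poch_neq0 c n Hc). assert (Hfn := poch_prod_neq0 f n Hf).
  assert (Hfact := RtoC_INR_fact_neq0 n).
  set (T := poch a n * poch b n / poch c n * cpow x n / RtoC (INR (fact n))).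
  rewrite (csum_ext _ (fun k => T * (cpow (- RtoC 1) k * stirling_coef alpha M k
                                     * poch (b + RtoC (INR n)) k))).
  2:{ intros k _. rewrite hyp_term_poch_prod. unfold poch_prod. simpl fold_right.
      assert (E := poch_add_comm b k n).
      transitivity (poch a n / poch c n * cpow x n / RtoC (INR (fact n))
                    * cpow (- RtoC 1) k * stirling_coef alpha M k
                    * (poch (b + RtoC (INR k)) n * poch b k)); [field; auto |].
      rewrite E. unfold T. field. auto. }
  rewrite csum_mult_l, csum_stirling_coef_poch, <- hP.
  rewrite (map_ext (fun fi => fi - b - - (b + RtoC (INR n))) (fun fi => fi + RtoC (INR n)))
    by (intros; ring).
  assert (Evadd : poch_prod (vadd f m) n
                  = poch_prod f n * poch_vec (map (fun fi => fi + RtoC (INR n)) f) m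
                    / poch_vec f m)
    by (rewrite <- poch_prod_vadd by exact Hlen; field; exact Hfm).
  rewrite hyp_term_poch_prod, !poch_prod_cons, Evadd. unfold T.
  field. repeat split; auto.
Qed.

Lemma is_series_hyp_stirling (f : list C) (m : list nat) (a b c x : C)
  (alpha : nat -> C) (M : nat) :
  length f = length m -> poch_vec f m <> 0 ->
  (forall i l, (i < length f)%nat -> nth i f 0 <> - RtoC (INR l)) ->
  (forall l, c <> - RtoC (INR l)) ->
  (forall t, poch_vec (map (fun fi => fi - b - t) f) m
             = csum (fun j => alpha j * cpow t j) (S M)) ->
  (Cmod x < 1)%R ->
  is_series (V := C_NormedModule) (hyp_term (a :: b :: vadd f m) (c :: f) x)
    (/ poch_vec f m
     * csum (fun k => cpow (- RtoC 1) k * stirling_coef alpha M k * poch b k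
                      * hypF (a :: b + RtoC (INR k) :: nil) (c :: nil) x) (S M)).
Proof.
  intros Hlen Hfm Hf Hc hP Hx.
  eapply is_series_ext.
  { intros n. symmetry. apply (hyp_term_stirling_expansion f m a b c x alpha M n); assumption. }
  apply (is_series_scal (V := C_NormedModule)), is_series_csum. intros k _.
  apply (is_series_scal (V := C_NormedModule)), is_series_hypF_2F1; assumption.
Qed.

Lemma stirling_coef_hypF (f : list C) (m : list nat) (b : C) (alpha : nat -> C) (M k : nat) :
  length f = length m ->
  (forall t, poch_vec (map (fun fi => fi - b - t) f) m
             = csum (fun j => alpha j * cpow t j) (S M)) ->
  (k <= M)%nat ->
  (forall n, (n <= k)%nat ->
     poch_prod (map (fun p => RtoC 1 - fst p + b - RtoC (INR (snd p))) (combine f m)) n <> 0) ->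
  stirling_coef alpha M k
  = cpow (- RtoC 1) k * poch_vec (map (fun fi => fi - b) f) m / RtoC (INR (fact k))
    * hypF (- RtoC (INR k) :: map (fun fi => RtoC 1 - fi + b) f)
           (map (fun p => RtoC 1 - fst p + b - RtoC (INR (snd p))) (combine f m)) (RtoC 1).
Proof.
  intros Hlen hP Hk Hden.
  set (L1 := - RtoC (INR k) :: map (fun fi => RtoC 1 - fi + b) f).
  set (L2 := map (fun p => RtoC 1 - fst p + b - RtoC (INR (snd p))) (combine f m)) in *.
  set (G := poch_vec (map (fun fi => fi - b) f) m).
  assert (Hterm : forall n, (k < n)%nat -> hyp_term L1 L2 1 n = 0).
  { intros n Hn. rewrite hyp_term_poch_prod. unfold L1.
    rewrite poch_prod_cons, poch_neg_nat by exact Hn. unfold Cdiv. ring. }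
  rewrite (hypF_eq L1 L2 1 _ (is_series_finite _ k Hterm)).
  rewrite stirling_coef_sbinom by exact Hk.
  transitivity (cpow (- RtoC 1) k / RtoC (INR (fact k))
                * csum (fun n => G * hyp_term L1 L2 1 n) (S k)).
  - f_equal. apply csum_ext. intros n Hn.
    assert (HL2 := Hden n ltac:(lia)).
    assert (Hfact := RtoC_INR_fact_neq0 n).
    assert (E := poch_vec_reflect b n f m Hlen). fold L2 G in E.
    rewrite <- hP, hyp_term_poch_prod. unfold L1, sbinom.
    rewrite poch_prod_cons, cpow_one.
    transitivity (poch (- RtoC (INR k)) n / RtoC (INR (fact n)) / poch_prod L2 n
                  * (poch_prod L2 n * poch_vec (map (fun fi => fi - b - RtoC (INR n)) f) m));
      [field; auto |].
    rewrite <- E. field. auto.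
  - rewrite csum_mult_l. field. apply RtoC_INR_fact_neq0.
Qed.

Theorem corollary1 (r : nat) (f : list C) (m : list nat) (a b c x : C)
  (alpha : nat -> C) :
  (1 <= r)%nat -> length f = r -> length m = r ->
  poch_vec f m <> RtoC 0 ->
  (forall i n, (i < r)%nat -> nth i f (RtoC 0) <> - RtoC (INR n)) ->
  (forall n : nat, c <> - RtoC (INR n)) ->
  (* alpha_j are the coefficients of t |-> (f - b - t)_m, a polynomial of degree m *)
  (forall t : C, poch_vec (map (fun fi => fi - b - t) f) m
                 = csum (fun j => alpha j * cpow t j) (S (sumn m))) ->
  Cmod x < 1 ->
  let M := sumn m in
  let D := fun k : nat =>
    csum (fun j => if (k <=? j)%nat then alpha j * RtoC (INR (stirling2 j k))
                   else RtoC 0) (S M) in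
  is_series (V := C_NormedModule)
    (hyp_term (a :: b :: vadd f m) (c :: f) x)
    (/ poch_vec f m *
     csum (fun k => cpow (- RtoC 1) k * D k * poch b k
                    * hypF (a :: b + RtoC (INR k) :: nil) (c :: nil) x) (S M))
  /\
  (forall k : nat, (k <= M)%nat ->
     (forall n, (n <= k)%nat ->
        fold_right (fun p acc => poch p n * acc) (RtoC 1)
          (map (fun p => RtoC 1 - fst p + b - RtoC (INR (snd p))) (combine f m))
        <> RtoC 0) ->
     D k = cpow (- RtoC 1) k
           * poch_vec (map (fun fi => fi - b) f) m / RtoC (INR (fact k))
           * hypF (- RtoC (INR k) :: map (fun fi => RtoC 1 - fi + b) f)
                  (map (fun p => RtoC 1 - fst p + b - RtoC (INR (snd p)))
                       (combine f m))
                  (RtoC 1)).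
Proof.
  intros _ Hf Hm Hfm Hfi Hc hP Hx M D.
  assert (Hlen : length f = length m) by congruence.
  split.
  - apply is_series_hyp_stirling; auto.
    intros i l Hi. apply Hfi. lia.
  - intros k Hk Hden. apply stirling_coef_hypF; assumption.
Qed.
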